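(* Let $H$ be a digraph (possibly with loops) and let $D$ be an $H$-colored tournament in which every directed $3$-cycle is an $H$-cycle. Then for every $k \geq 2$, $D$ has a $(k,H)$-kernel.
   Context: All digraphs are finite. A tournament is a digraph in which every two distinct vertices are joined by exactly one arc (no loops, no symmetric arcs). $D$ comes with a map $\rho: A(D)\to V(H)$. For a walk $W=(x_0,\ldots,x_n)$ in $D$, there is an obstruction on $x_i$ if $(\rho(x_{i-1},x_i),\rho(x_i,x_{i+1})) \notin A(H)$; for an open walk this is considered at internal vertices $x_i$, $1\le i\le n-1$, for a closed walk at all $i\in\{0,\ldots,n-1\}$ with indices modulo $n$. $O_H(W)$ is the set of indices with an obstruction; the $H$-length is $l_H(W)=|O_H(W)|+1$ for open $W$ and $|O_H(W)|$ for closed $W$. An $H$-cycle is a directed cycle with no obstructions. A $(k,H)$-kernel ($k\ge2$) is a set $S\subseteq V(D)$ such that for every two distinct $u,v\in S$ every directed $uv$-path in $D$ has $H$-length at least $k$, and for every $x\in V(D)\setminus S$ there is a directed path from $x$ to a vertex of $S$ of $H$-length at most $k-1$. *)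

From mathcomp Require Import all_boot.
Set Implicit Arguments. Unset Strict Implicit. Unset Printing Implicit Defensive.

Definition tournament (V : finType) (E : rel V) : Prop :=
  (forall x, ~~ E x x) /\
  (forall x y, x != y -> (E x y && ~~ E y x) || (E y x && ~~ E x y)).

Section HColoring.
Variables (V VH : finType) (H : rel VH) (rho : V -> V -> VH).
(* rho x y is the colour of the arc (x,y); only its values on arcs matter. *)

(* obs a b r : number of obstructions on the internal vertices of the walk
   (a, b, r_0, r_1, ...), i.e. at b, r_0, ..., excluding the last vertex. *)
Fixpoint obs (a b : V) (r : seq V) : nat :=
  match r with
  | [::] => 0
  | c :: r' => (~~ H (rho a b) (rho b c)) + obs b c r'
  end.

Definition Hlength (x : V) (p : seq V) : nat :=
  match p with
  | [::] => 1
  | y :: r => (obs x y r).+1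
  end.

(* Number of obstructions of the closed walk c_0 c_1 ... c_{n-1} c_0. *)
Definition closed_obs (c : seq V) : nat :=
  match c with
  | a :: b :: r => obs a b (r ++ [:: a; b])
  | _ => 0
  end.

End HColoring.

Definition dpath (V : finType) (E : rel V) (x : V) (p : seq V) : bool :=
  path E x p && uniq (x :: p).

Definition dcycle (V : finType) (E : rel V) (c : seq V) : bool :=
  cycle E c && uniq c.

Definition Hcycle (V VH : finType) (E : rel V) (H : rel VH)
  (rho : V -> V -> VH) (c : seq V) : Prop :=
  dcycle E c /\ closed_obs H rho c = 0.

Definition kH_kernel (V VH : finType) (E : rel V) (H : rel VH)
  (rho : V -> V -> VH) (k : nat) (S : {set V}) : Prop :=
  (forall u v p, u \in S -> v \in S -> u != v ->
     dpath E u p -> last u p = v -> k <= Hlength H rho u p) /\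
  (forall x, x \notin S -> exists p,
     [/\ dpath E x p, last x p \in S & Hlength H rho x p <= k - 1]).

From mathcomp Require Import all_boot.
Set Implicit Arguments. Unset Strict Implicit. Unset Printing Implicit Defensive.

(* A vertex v of maximum in-degree in a tournament is reached from every other
   vertex x by a directed path of length at most 2.  If that path is x -> w -> v
   and v -> x, it closes a directed 3-cycle, which is an H-cycle, so there is no
   obstruction at w; either way x reaches v with H-length 1, and {v} is a
   (k,H)-kernel for every k >= 2. *)

Section Tournament.
Variables (V : finType) (E : rel V).
Hypothesis tourE : tournament E.

Lemma tournament_irrefl x : ~~ E x x.
Proof. by case: tourE. Qed.

Lemma tournament_connex x y : x != y -> E x y || E y x.
Proof. by case: tourE => _ tot /tot /orP [/andP [-> _] | /andP [-> _]]; rewrite ?orbT. Qed.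

Definition in_nbhd (x : V) : {set V} := [set y | E y x].

Lemma exists_max_indegree (v0 : V) :
  exists v, forall x, #|in_nbhd x| <= #|in_nbhd v|.
Proof.
case: (@arg_maxnP V v0 predT (fun v => #|in_nbhd v|)) => // v _ vmax.
by exists v => x; apply: vmax.
Qed.

Lemma max_indegree_absorbs v :
  (forall x, #|in_nbhd x| <= #|in_nbhd v|) ->
  forall x, x != v -> ~~ E x v -> exists2 w, E x w & E w v.
Proof.
move=> vmax x xv nExv; apply/exists_inP; apply: contraT; rewrite negb_exists_in.
move=> /forall_inP no_w.
have Evx : E v x by move: (tournament_connex xv); rewrite (negbTE nExv).
suff : in_nbhd v \proper in_nbhd x by move/proper_card; rewrite ltnNge vmax.
apply/properP; split; last by exists v; rewrite !inE ?Evx ?tournament_irrefl.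
apply/subsetP => y; rewrite !inE => Eyv.
have yx : y != x by apply: contraNneq nExv => <-.
by case/orP: (tournament_connex yx) => // /no_w; rewrite Eyv.
Qed.

End Tournament.

Lemma Hcycle3_no_obstruction (V VH : finType) (E : rel V) (H : rel VH)
  (rho : V -> V -> VH) x y z :
  Hcycle E H rho [:: x; y; z] -> H (rho x y) (rho y z).
Proof. by case=> _; rewrite /closed_obs /=; case: (H (rho x y) (rho y z)). Qed.

Lemma singleton_kH_kernel (V VH : finType) (E : rel V) (H : rel VH)
  (rho : V -> V -> VH) k v :
  (forall x, x != v ->
     exists p, [/\ dpath E x p, last x p = v & Hlength H rho x p <= k - 1]) ->
  kH_kernel E H rho k [set v].
Proof.
move=> reach_v; split=> [u w p | x]; first by rewrite !inE => /eqP -> /eqP ->; rewrite eqxx.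
rewrite inE => /reach_v [p [dp pv lenp]]; exists p.
by split; rewrite // pv inE.
Qed.

Lemma max_indegree_Hreachable (V VH : finType) (E : rel V) (H : rel VH)
  (rho : V -> V -> VH) :
  tournament E ->
  (forall x y z : V, dcycle E [:: x; y; z] -> Hcycle E H rho [:: x; y; z]) ->
  forall v, (forall x, #|in_nbhd E x| <= #|in_nbhd E v|) ->
  forall x, x != v ->
  exists p, [/\ dpath E x p, last x p = v & Hlength H rho x p = 1].
Proof.
move=> tourE Hcycle3 v vmax x xv.
case Exv: (E x v).
  by exists [:: v]; split; rewrite // /dpath /= Exv inE xv.
have [w Exw Ewv] := max_indegree_absorbs tourE vmax xv (negbT Exv).
have Evx : E v x by move: (tournament_connex tourE xv); rewrite Exv.
have xw : x != w by apply: contraTneq Exw => <-; apply: tournament_irrefl.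
have wv : w != v by apply: contraTneq Ewv => ->; apply: tournament_irrefl.
have cyc : dcycle E [:: x; w; v].
  by rewrite /dcycle /= Exw Ewv Evx /= !inE !negb_or xw xv wv.
exists [:: w; v]; split=> //.
  by rewrite /dpath /= Exw Ewv !inE !negb_or xw xv wv.
by rewrite /Hlength /= (Hcycle3_no_obstruction (Hcycle3 _ _ _ cyc)).
Qed.

Theorem corollary9 (V VH : finType) (E : rel V) (H : rel VH)
  (rho : V -> V -> VH) :
  tournament E ->
  (forall x y z : V, dcycle E [:: x; y; z] -> Hcycle E H rho [:: x; y; z]) ->
  forall k : nat, 2 <= k -> exists S : {set V}, kH_kernel E H rho k S.
Proof.
move=> tourE Hcycle3 k k_ge2.
case: (pickP (@predT V)) => [v0 _ | V0]; last first.
  by exists set0; split=> [u | x]; [rewrite inE | have := V0 x].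
have [v vmax] := exists_max_indegree E v0.
exists [set v]; apply: singleton_kH_kernel => x xv.
have [p [dp pv lenp]] := max_indegree_Hreachable tourE Hcycle3 vmax xv.
by exists p; split; rewrite // lenp subn_gt0.
Qed.
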